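(* Let $\varepsilon>0$ and $a\geq 0$ with $a+\varepsilon\leq 1$. If $\omega(1,1,a)=r$, then $\omega(1,1-\varepsilon,a+\varepsilon)\leq r$.
   Context: $\omega(x_1,x_2,x_3)$ denotes the exponent of rectangular matrix multiplication: multiplying an $n^{x_1}\times n^{x_2}$ matrix by an $n^{x_2}\times n^{x_3}$ matrix takes $n^{\omega(x_1,x_2,x_3)+o(1)}$ time (equivalently, arithmetic operations / tensor rank exponent). It is invariant under permuting its three arguments. *)

From HB Require Import structures.
From mathcomp Require Import all_boot all_order all_algebra.
From mathcomp Require Import all_classical all_reals all_analysis.
Set Implicit Arguments. Unset Strict Implicit. Unset Printing Implicit Defensive.
Import Order.TTheory GRing.Theory Num.Theory.
Local Open Scope ring_scope.
Local Open Scope classical_set_scope.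

(* The matrix multiplication tensor <m,n,p> = sum_{i,j,l} x_{ij} y_{jl} z_{li}
   over the field F has rank <= k. *)
Definition mm_rank_le (F : fieldType) (m n p k : nat) : Prop :=
  exists (u : 'I_k -> 'I_m -> 'I_n -> F) (v : 'I_k -> 'I_n -> 'I_p -> F)
         (w : 'I_k -> 'I_p -> 'I_m -> F),
    forall (i : 'I_m) (j j' : 'I_n) (l l' : 'I_p) (i' : 'I_m),
      \sum_(s < k) u s i j * v s j' l * w s l' i'
        = ((j == j') && (l == l') && (i == i'))%:R.

Definition dimn (R : realType) (N : nat) (x : R) : nat := Num.truncn (N%:R `^ x).

Definition omega_set (F : fieldType) (R : realType) (x1 x2 x3 : R) : set R :=
  [set tau | exists C : R, forall N : nat, (0 < N)%N ->
     exists k : nat, mm_rank_le F (dimn N x1) (dimn N x2) (dimn N x3) k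
                     /\ k%:R <= C * N%:R `^ tau].

Definition omega (F : fieldType) (R : realType) (x1 x2 x3 : R) : R :=
  inf (omega_set F x1 x2 x3).

From HB Require Import structures.
From mathcomp Require Import all_boot all_order all_algebra.
From mathcomp Require Import all_classical all_reals all_analysis.
From mathcomp Require Import ring lra.
Import Order.TTheory GRing.Theory Num.Theory.
Set Implicit Arguments. Unset Strict Implicit.
Local Open Scope ring_scope.

(* Write n = x * y with x = n ^ (1 - t), y = n ^ t and t = eps / (1 - a).
   Tensoring a decomposition of <x, x, x ^ a> with the cyclic shift
   <y, y ^ a, y> of a decomposition of <y, y, y ^ a> decomposes
   <x y, x y ^ a, x ^ a y> = <n, n ^ (1 - eps), n ^ (a + eps)>, with rank the
   product of the ranks, i.e. O(x ^ tau * y ^ tau) = O(n ^ tau).  So every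
   exponent valid for (1, 1, a) is valid for (1, 1 - eps, a + eps), and the
   infimum can only decrease.  Rounding x and y to integers costs constant
   factors only. *)

Section Decompositions.
Variable F : fieldType.

(* [mm_rank_le] over arbitrary finite index types, which is closed under
   products and cyclic shifts of the index types. *)
Definition mm_decomp (S I J L : finType) : Prop :=
  exists (u : S -> I -> J -> F) (v : S -> J -> L -> F) (w : S -> L -> I -> F),
    forall (i : I) (j j' : J) (l l' : L) (i' : I),
      \sum_(s : S) u s i j * v s j' l * w s l' i'
        = ((j == j') && (l == l') && (i == i'))%:R.

Lemma mm_decomp_cycle (S I J L : finType) :
  mm_decomp S I J L -> mm_decomp S J L I.
Proof.
move=> [u [v [w uvw]]]; exists v, w, u => j l l' i i' j'.
transitivity (\sum_s u s i' j' * v s j l * w s l' i).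
  by apply: eq_bigr => s _; rewrite mulrC mulrA.
rewrite uvw (eq_sym i') (eq_sym j').
by case: (j == j'); case: (l == l'); case: (i == i').
Qed.

Lemma mm_decomp_tensor (S1 I1 J1 L1 S2 I2 J2 L2 : finType) :
  mm_decomp S1 I1 J1 L1 -> mm_decomp S2 I2 J2 L2 ->
  mm_decomp (S1 * S2)%type (I1 * I2)%type (J1 * J2)%type (L1 * L2)%type.
Proof.
move=> [u1 [v1 [w1 uvw1]]] [u2 [v2 [w2 uvw2]]].
exists (fun s i j => u1 s.1 i.1 j.1 * u2 s.2 i.2 j.2).
exists (fun s j l => v1 s.1 j.1 l.1 * v2 s.2 j.2 l.2).
exists (fun s l i => w1 s.1 l.1 i.1 * w2 s.2 l.2 i.2).
move=> [i1 i2] [j1 j2] [j1' j2'] [l1 l2] [l1' l2'] [i1' i2'] /=.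
transitivity ((\sum_(s1 : S1) u1 s1 i1 j1 * v1 s1 j1' l1 * w1 s1 l1' i1') *
              \sum_(s2 : S2) u2 s2 i2 j2 * v2 s2 j2' l2 * w2 s2 l2' i2').
  by rewrite big_distrlr pair_bigA; apply: eq_bigr => s _ /=; ring.
rewrite uvw1 uvw2 !xpair_eqE -natrM.
by case: (j1 == j1'); case: (j2 == j2'); case: (l1 == l1'); case: (l2 == l2');
   case: (i1 == i1'); case: (i2 == i2').
Qed.

Lemma mm_decomp_trivial (I J L : finType) : mm_decomp (I * J * L)%type I J L.
Proof.
exists (fun s i j => ((s.1.1 == i) && (s.1.2 == j))%:R).
exists (fun s j l => ((s.1.2 == j) && (s.2 == l))%:R).
exists (fun s l i => ((s.2 == l) && (s.1.1 == i))%:R).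
move=> i j j' l l' i'; rewrite (bigD1 (i, j, l)) //= big1 ?addr0.
  by rewrite !eqxx -!natrM; case: (j == j'); case: (l == l'); case: (i == i').
move=> [[i0 j0] l0] /negbTE; rewrite !xpair_eqE /=.
by case: (i0 == i); case: (j0 == j); case: (l0 == l) => //= _;
   rewrite ?andbF ?(mul0r, mulr0).
Qed.

Lemma mm_rank_le_decomp m n p k :
  mm_rank_le F m n p k -> mm_decomp 'I_k 'I_m 'I_n 'I_p.
Proof. by []. Qed.

Lemma ord_inj_of_le_card (T : finType) m :
  (m <= #|T|)%N -> exists f : 'I_m -> T, injective f.
Proof.
move=> m_le; exists (fun i => enum_val (widen_ord m_le i)).
by move=> i i' /enum_val_inj /(congr1 val) /= /val_inj.
Qed.

(* Restriction along injections of the index types preserves the Kronecker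
   deltas. *)
Lemma mm_decomp_rank_le (S I J L : finType) m n p : mm_decomp S I J L ->
  (m <= #|I|)%N -> (n <= #|J|)%N -> (p <= #|L|)%N -> mm_rank_le F m n p #|S|.
Proof.
move=> [u [v [w uvw]]] /ord_inj_of_le_card [fI fI_inj]
  /ord_inj_of_le_card [fJ fJ_inj] /ord_inj_of_le_card [fL fL_inj].
exists (fun s i j => u (enum_val s) (fI i) (fJ j)).
exists (fun s j l => v (enum_val s) (fJ j) (fL l)).
exists (fun s l i => w (enum_val s) (fL l) (fI i)).
move=> i j j' l l' i'.
by rewrite -(big_enum_val (fun s => u s _ _ * v s _ _ * w s _ _)) uvw !inj_eq.
Qed.

Lemma mm_rank_le_cycle m n p k : mm_rank_le F m n p k -> mm_rank_le F n p m k.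
Proof.
move/mm_rank_le_decomp/mm_decomp_cycle/mm_decomp_rank_le.
by rewrite !card_ord; apply.
Qed.

Lemma mm_rank_le_mul m1 n1 p1 k1 m2 n2 p2 k2 m n p :
  mm_rank_le F m1 n1 p1 k1 -> mm_rank_le F m2 n2 p2 k2 ->
  (m <= m1 * m2)%N -> (n <= n1 * n2)%N -> (p <= p1 * p2)%N ->
  mm_rank_le F m n p (k1 * k2).
Proof.
move=> /mm_rank_le_decomp D1 /mm_rank_le_decomp D2.
have := mm_decomp_rank_le (mm_decomp_tensor D1 D2).
by rewrite !card_prod !card_ord; apply.
Qed.

Lemma mm_rank_le_trivial m n p : mm_rank_le F m n p (m * n * p).
Proof.
have := mm_decomp_rank_le (mm_decomp_trivial 'I_m 'I_n 'I_p).
by rewrite !card_prod !card_ord; apply.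
Qed.

Lemma mm_rank_le_gt0 m n p k : (0 < m)%N -> (0 < n)%N -> (0 < p)%N ->
  mm_rank_le F m n p k -> (0 < k)%N.
Proof.
case: m n p => [|m] [|n] [|p] // _ _ _ [u [v [w uvw]]].
case: k u v w uvw => // u v w /(_ ord0 ord0 ord0 ord0 ord0 ord0).
by rewrite big_ord0 !eqxx => /eqP; rewrite eq_sym oner_eq0.
Qed.

End Decompositions.

Section RealBounds.
Variable R : realType.
Implicit Types (a b c eps x y tau : R) (M N K : nat).

Lemma powR_ge1 x b : 1 <= x -> 0 <= b -> 1 <= x `^ b.
Proof. by move=> x_ge1 b_ge0; rewrite -(powRr0 x); apply: ler_powR. Qed.

Lemma dimn1 N : dimn N (1 : R) = N.
Proof. by rewrite /dimn powRr1 // natrK. Qed.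

Lemma dimn_le N b : (dimn N b)%:R <= N%:R `^ b :> R.
Proof. by rewrite /dimn truncn_le powR_ge0. Qed.

Lemma dimn_gt0 N b : (0 < N)%N -> 0 <= b -> (0 < dimn N b)%N.
Proof. by move=> N_gt0 b_ge0; rewrite /dimn truncn_gt0 powR_ge1 ?ler1n. Qed.

Lemma dimn_ge_half N b :
  (0 < N)%N -> 0 <= b -> N%:R `^ b / 2 <= (dimn N b)%:R.
Proof.
move=> N_gt0 b_ge0; have := truncnS_gt (N%:R `^ b : R).
have : 1 <= (dimn N b)%:R :> R by rewrite ler1n dimn_gt0.
by rewrite /dimn -addn1 natrD; lra.
Qed.

Lemma exists_nat_between x :
  1 <= x -> exists M, 2 * x <= M%:R /\ M%:R <= 4 * x.
Proof.
move=> x_ge1; exists (2 * (Num.truncn x).+1)%N.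
have := truncnS_gt x; have : (Num.truncn x)%:R <= x by rewrite truncn_le; lra.
by rewrite natrM -addn1 natrD; lra.
Qed.

Lemma powR_le_comparable c x y tau : 0 < x -> x <= y -> y <= c * x ->
  y `^ tau <= (c `^ tau + 1) * x `^ tau.
Proof.
move=> x_gt0 xy yc.
have c_ge0 : 0 <= c by rewrite -(pmulr_lge0 _ x_gt0); lra.
have x_tau_ge0 := powR_ge0 x tau.
have c_tau_ge0 := powR_ge0 c tau.
have [tau_ge0|tau_lt0] := leP 0 tau.
  have : y `^ tau <= (c * x) `^ tau.
    by apply: ge0_ler_powR; rewrite ?nnegrE //; lra.
  by rewrite powRM //; nra.
suff : y `^ tau <= x `^ tau by nra.
rewrite -[tau]opprK (powRN y (- tau)) (powRN x (- tau)).
rewrite lef_pV2 ?posrE ?powR_gt0 //; try lra.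
apply: ge0_ler_powR; rewrite ?nnegrE //; lra.
Qed.

Lemma mul_powR_le_dimn a x y M K : 0 <= a -> 0 <= x -> 2 * x <= M%:R ->
  1 <= y -> 2 * y <= K%:R -> x * y `^ a <= M%:R * (dimn K a)%:R.
Proof.
move=> a_ge0 x_ge0 xM y_ge1 yK.
have K_gt0 : (0 < K)%N by rewrite -(ltr0n R); lra.
have y_le : y `^ a <= K%:R `^ a by apply: ge0_ler_powR; rewrite ?nnegrE //; lra.
have := dimn_ge_half K_gt0 a_ge0; have := powR_ge0 y a.
by nra.
Qed.

Lemma exists_size_split eps a N :
  0 < eps -> 0 <= a -> a + eps <= 1 -> (0 < N)%N ->
  exists M K, [/\ (N <= M * K)%N, (M * K <= 16 * N)%N,
    (dimn N (1 - eps) <= M * dimn K a)%N &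
    (dimn N (a + eps) <= dimn M a * K)%N].
Proof.
move=> eps_gt0 a_ge0 a_eps_le1 N_gt0.
set n : R := N%:R.
have n_ge1 : 1 <= n by rewrite ler1n.
have n_neq0 : n != 0 by rewrite gt_eqF //; lra.
pose t := eps / (1 - a).
have t_eps : t * (1 - a) = eps by rewrite /t mulfVK // gt_eqF //; lra.
have t_ge0 : 0 <= t by rewrite /t divr_ge0 //; lra.
have t_le1 : t <= 1 by rewrite /t ler_pdivrMr ?mul1r //; lra.
pose x := n `^ (1 - t); pose y := n `^ t.
have x_ge1 : 1 <= x by apply: powR_ge1; lra.
have y_ge1 : 1 <= y by apply: powR_ge1.
have n_xy : n = x * y.
  by rewrite -powRD ?n_neq0 ?implybT // subrK powRr1 //; lra.
have n_1eps : n `^ (1 - eps) = x * y `^ a.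
  by rewrite -powRrM -powRD ?n_neq0 ?implybT // -t_eps; congr (_ `^ _); ring.
have n_aeps : n `^ (a + eps) = y * x `^ a.
  by rewrite -powRrM -powRD ?n_neq0 ?implybT // -t_eps; congr (_ `^ _); ring.
clearbody x y t.
have [M [xM Mx]] := exists_nat_between x_ge1.
have [K [yK Ky]] := exists_nat_between y_ge1.
have n_le_MK : n <= M%:R * K%:R by rewrite n_xy; apply: ler_pM; lra.
have MK_le_n : M%:R * K%:R <= 16 * n.
  rewrite n_xy (_ : 16 * (x * y) = (4 * x) * (4 * y)); last by ring.
  by apply: ler_pM; lra.
exists M, K; split; rewrite -(ler_nat R) ?natrM //.
- apply: le_trans (dimn_le _ _) _; rewrite -/n n_1eps.
  by apply: mul_powR_le_dimn => //; lra.
- rewrite mulrC; apply: le_trans (dimn_le _ _) _; rewrite -/n n_aeps.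
  by apply: mul_powR_le_dimn => //; lra.
Qed.

End RealBounds.

Section ExponentSets.
Variables (F : fieldType) (R : realType).
Implicit Types (a eps tau : R).

Lemma omega_set_ge0 (x1 x2 x3 : R) tau : 0 <= x1 -> 0 <= x2 -> 0 <= x3 ->
  omega_set F x1 x2 x3 tau -> 0 <= tau.
Proof.
move=> x1_ge0 x2_ge0 x3_ge0 [C HC].
have rank_ge1 N : (0 < N)%N -> 1 <= C * N%:R `^ tau.
  move=> N_gt0; have [k [rk k_le]] := HC N N_gt0.
  apply: le_trans k_le; rewrite ler1n.
  by apply: mm_rank_le_gt0 rk; apply: dimn_gt0.
rewrite leNgt; apply/negP => tau_lt0.
have C_ge1 : 1 <= C by have := rank_ge1 1%N isT; rewrite powR1 mulr1.
have p_gt0 : 0 < - tau by rewrite oppr_gt0.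
pose N := (Num.truncn (C `^ (- tau)^-1)).+1.
have C_lt : C < N%:R `^ (- tau).
  have := @gt0_ltr_powR R (- tau) p_gt0 (C `^ (- tau)^-1) N%:R.
  rewrite !nnegrE powR_ge0 ler0n -powRrM mulVf ?gt_eqF // powRr1; last lra.
  by apply=> //; apply: truncnS_gt.
have := rank_ge1 N isT; rewrite -[tau]opprK powRN.
by rewrite ler_pdivlMr ?powR_gt0 // mul1r; lra.
Qed.

Lemma omega_set_trivial (x1 x2 x3 : R) : 0 <= x1 -> 0 <= x2 -> 0 <= x3 ->
  omega_set F x1 x2 x3 (x1 + x2 + x3).
Proof.
move=> x1_ge0 x2_ge0 x3_ge0; exists 1 => N N_gt0.
exists (dimn N x1 * dimn N x2 * dimn N x3)%N.
split; first exact: mm_rank_le_trivial.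
have N_neq0 : N%:R != 0 :> R by rewrite pnatr_eq0 -lt0n.
rewrite mul1r !powRD ?N_neq0 ?implybT // !natrM.
by rewrite ler_pM ?mulr_ge0 ?ler_pM ?dimn_le.
Qed.

Lemma omega_set_shift eps a tau : 0 < eps -> 0 <= a -> a + eps <= 1 ->
  omega_set F 1 1 a tau -> omega_set F 1 (1 - eps) (a + eps) tau.
Proof.
move=> eps_gt0 a_ge0 a_eps_le1 [C HC].
exists (C * C * (16 `^ tau + 1)) => N N_gt0.
have [M [K [N_le_MK MK_le_N dim_1eps dim_aeps]]] :=
  exists_size_split eps_gt0 a_ge0 a_eps_le1 N_gt0.
have /andP[M_gt0 K_gt0] : (0 < M)%N && (0 < K)%N.
  by rewrite -muln_gt0 (leq_trans N_gt0).
have [k1 [rk1 k1_le]] := HC M M_gt0; rewrite dimn1 in rk1.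
have [k2 [rk2 k2_le]] := HC K K_gt0; rewrite dimn1 in rk2.
exists (k1 * k2)%N; split.
  by apply: mm_rank_le_mul rk1 (mm_rank_le_cycle rk2) _ _ _; rewrite ?dimn1.
rewrite natrM; apply: le_trans (ler_pM (ler0n _ _) (ler0n _ _) k1_le k2_le) _.
rewrite mulrACA -powRM ?ler0n // -[leRHS]mulrA.
apply: ler_wpM2l; first by rewrite -expr2 sqr_ge0.
by apply: powR_le_comparable; rewrite -?natrM ?ltr0n ?ler_nat.
Qed.

End ExponentSets.

Unset Implicit Arguments.
Theorem theorem9 (F : fieldType) (R : realType) (eps a r : R) :
  0 < eps -> 0 <= a -> a + eps <= 1 ->
  omega F 1 1 a = r -> omega F 1 (1 - eps) (a + eps) <= r.
Proof.
move=> eps_gt0 a_ge0 a_eps_le1 <-.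
apply: lb_le_inf; first by exists (1 + 1 + a); apply: omega_set_trivial.
move=> tau tau_in; apply: ge_inf; last exact: omega_set_shift.
by exists 0 => sigma; apply: omega_set_ge0; lra.
Qed.
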